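(* Let $n\geq 4$ and let $\nu: B_n\to GL_{n+1}(\mathbb{C})$ be a non-trivial homogeneous $3$-local representation of $B_n$. Then any homogeneous $3$-local extension $\nu':SM_n\to M_{n+1}(\mathbb{C})$ of $\nu$ to $SM_n$ is equivalent to one of the representations $\nu'_j$, $1\leq j\leq 8$, given for all $1\le i\le n-1$ by $\nu'_j(\sigma_i)=\mathrm{diag}(I_{i-1},M_j,I_{n-i-1})$ and $\nu'_j(\tau_i)=\mathrm{diag}(I_{i-1},N_j,I_{n-i-1})$, where (all entries complex): (1) $M_1=\begin{pmatrix} 1&0&0\\ 0&m_{22}&m_{23}\\ 0&\frac{1-m_{22}}{m_{23}}&0\end{pmatrix}$ with $m_{22}\neq1$, $m_{23}\neq0$, and (a) $N_1=\begin{pmatrix} 1&0&0\\ 0&n_{22}&m_{23}^2n_{32}\\ 0&n_{32}&n_{22}\end{pmatrix}$ if $m_{22}=0$; (b) $N_1=\begin{pmatrix} 1&0&0\\ 0&1-m_{23}n_{32}&\frac{-m_{23}^2n_{32}}{m_{22}-1}\\ 0&n_{32}&\frac{-1+m_{22}+m_{23}n_{32}}{m_{22}-1}\end{pmatrix}$ otherwise. (2) $M_2=\begin{pmatrix} 0&m_{12}&0\\ \frac{1-m_{22}}{m_{12}}&m_{22}&0\\ 0&0&1\end{pmatrix}$ with $m_{22}\neq1$, $m_{12}\neq0$, and (a) $N_2=\begin{pmatrix} n_{11}&m_{12}^2n_{21}&0\\ n_{21}&n_{11}&0\\ 0&0&1\end{pmatrix}$ if $m_{22}=0$; (b) $N_2=\begin{pmatrix}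 \frac{m_{12}n_{21}+m_{22}-1}{m_{22}-1}&-\frac{m_{12}^2n_{21}}{m_{22}-1}&0\\ n_{21}&1-m_{12}n_{21}&0\\ 0&0&1\end{pmatrix}$ otherwise. (3) $M_3=\begin{pmatrix} 1&\frac{-m_{22}}{m_{32}}&0\\ 0&m_{22}&0\\ 0&m_{32}&1\end{pmatrix}$ with $m_{22}m_{32}\neq0$, and $N_3=\begin{pmatrix} 1&n_{12}&0\\ 0&1-m_{32}n_{12}+\frac{m_{32}n_{12}}{m_{22}}&0\\ 0&-\frac{m_{32}^2n_{12}}{m_{22}}&1\end{pmatrix}$. (4) $M_4=\begin{pmatrix} 1&0&0\\ -\frac{m_{22}}{m_{23}}&m_{22}&m_{23}\\ 0&0&1\end{pmatrix}$ with $m_{23}m_{22}\neq0$, and $N_4=\begin{pmatrix} 1&0&0\\ n_{21}&1-m_{23}n_{21}+\frac{m_{23}n_{21}}{m_{22}}&-\frac{m_{23}^2n_{21}}{m_{22}}\\ 0&0&1\end{pmatrix}$. (5) $M_5=\begin{pmatrix} 1&0&0\\ 0&0&m_{23}\\ 0&m_{32}&1-m_{23}m_{32}\end{pmatrix}$ with $m_{23}m_{32}\neq0$, and (a) $N_5=\begin{pmatrix} 1&0&0\\ 0&n_{22}&n_{23}\\ 0&\frac{n_{23}}{m_{23}^2}&n_{22}\end{pmatrix}$ if $m_{32}m_{23}=1$; (b) $N_5=\begin{pmatrix} 1&0&0\\ 0&n_{22}&m_{23}-m_{23}n_{22}\\ 0&m_{32}-m_{32}n_{22}&m_{23}m_{32}(n_{22}-1)+1\end{pmatrix}$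 otherwise. (6) $M_6=\begin{pmatrix} 1-m_{12}m_{21}&m_{12}&0\\ m_{21}&0&0\\ 0&0&1\end{pmatrix}$ with $m_{12}m_{21}\neq0$, and (a) $N_6=\begin{pmatrix} n_{11}&n_{12}&0\\ \frac{n_{12}}{m_{12}^2}&n_{11}&0\\ 0&0&1\end{pmatrix}$ if $m_{12}m_{21}=1$; (b) $N_6=\begin{pmatrix} m_{12}m_{21}(n_{22}-1)+1&m_{12}-m_{12}n_{22}&0\\ m_{21}-m_{21}n_{22}&n_{22}&0\\ 0&0&1\end{pmatrix}$ otherwise. (7) $M_7=\begin{pmatrix} 1&0&0\\ 0&0&m_{23}\\ 0&m_{32}&0\end{pmatrix}$ with $m_{23}m_{32}\neq0$, and $N_7=\begin{pmatrix} 1&0&0\\ 0&n_{22}&n_{23}\\ 0&\frac{m_{32}n_{23}}{m_{23}}&n_{22}\end{pmatrix}$. (8) $M_8=\begin{pmatrix} 0&m_{12}&0\\ m_{21}&0&0\\ 0&0&1\end{pmatrix}$ with $m_{12}m_{21}\neq0$, and $N_8=\begin{pmatrix} n_{11}&n_{12}&0\\ \frac{m_{21}n_{12}}{m_{12}}&n_{11}&0\\ 0&0&1\end{pmatrix}$. Moreover, if $\nu'(\tau_i)$ is invertible for all $1\leq i\leq n-1$, then $\nu'$ is a representation of the singular braid group $SB_n$.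
   Context: The braid group $B_n$ has generators $\sigma_1,\dots,\sigma_{n-1}$ with relations $\sigma_i\sigma_{i+1}\sigma_i=\sigma_{i+1}\sigma_i\sigma_{i+1}$ ($1\le i\le n-2$) and $\sigma_i\sigma_j=\sigma_j\sigma_i$ ($|i-j|\ge2$). The singular braid monoid $SM_n$ is the monoid generated by $\sigma_1^{\pm1},\dots,\sigma_{n-1}^{\pm1},\tau_1,\dots,\tau_{n-1}$ subject to $\sigma_i\sigma_i^{-1}=\sigma_i^{-1}\sigma_i=1$, the braid relations above, and $\tau_i\tau_j=\tau_j\tau_i$, $\tau_i\sigma_j=\sigma_j\tau_i$ for $|i-j|\ge 2$, $\tau_i\sigma_i=\sigma_i\tau_i$ for $1\le i\le n-1$, and $\sigma_i\sigma_{i+1}\tau_i=\tau_{i+1}\sigma_i\sigma_{i+1}$, $\sigma_{i+1}\sigma_i\tau_{i+1}=\tau_i\sigma_{i+1}\sigma_i$ for $1\le i\le n-2$. The singular braid group $SB_n$ is the group with generators $\sigma_i,\tau_i$ and the same relations (into which $SM_n$ embeds). A representation of $SM_n$ is a monoid homomorphism into $M_{n+1}(\mathbb{C})$. A representation $\nu:B_n\to GL_{n+1}(\mathbb{C})$ is homogeneous $3$-local if there is $M\in M_3(\mathbb{C})$ with $\nu(\sigma_i)=\mathrm{diag}(I_{i-1},M,I_{n-i-1})$ for all $1\le i\le n-1$; ''non-trivial'' means not sending every $\sigma_i$ to the identity. A homogeneous $3$-local extension of $\nu$ to $SM_n$ is a representation $\nu':SM_n\to M_{n+1}(\mathbb{C})$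 with $\nu'(\sigma_i)=\nu(\sigma_i)$ and $\nu'(\tau_i)=\mathrm{diag}(I_{i-1},N,I_{n-i-1})$ for all $i$, for a single $N\in M_3(\mathbb{C})$. Two representations are equivalent if they are conjugate by a fixed invertible matrix. *)

From mathcomp Require Import all_boot all_order all_algebra.
From mathcomp Require Import complex.
From mathcomp Require Import Rstruct.
Unset Printing Implicit Defensive.
Import Order.TTheory GRing.Theory Num.Theory.
Local Open Scope ring_scope.

Definition CC : numClosedFieldType := complex Rdefinitions.R.

(* local3 n i M = diag(I_{i-1}, M, I_{n-i-1}) in M_{n+1}(C), for 1 <= i <= n-1:
   the 3x3 block M occupies the (0-indexed) rows/columns i-1, i, i+1. *)
Definition local3 (n i : nat) (M : 'M[CC]_3) : 'M[CC]_(n.+1) :=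
  \matrix_(r, c)
    if (i.-1 <= r < i.+2)%N && (i.-1 <= c < i.+2)%N
    then M (inord (r - i.-1)) (inord (c - i.-1))
    else (r == c)%:R.

Definition far (i j : nat) : bool := (i.+2 <= j)%N || (j.+2 <= i)%N.

Definition braid_rep (n : nat) (S : nat -> 'M[CC]_(n.+1)) : Prop :=
  [/\ forall i, (1 <= i <= n.-1)%N -> S i \in unitmx,
      forall i, (1 <= i <= n - 2)%N ->
        S i *m S i.+1 *m S i = S i.+1 *m S i *m S i.+1 &
      forall i j, (1 <= i <= n.-1)%N -> (1 <= j <= n.-1)%N -> far i j ->
        S i *m S j = S j *m S i].

Definition singular_relations (n : nat) (S T : nat -> 'M[CC]_(n.+1)) : Prop :=
  (forall i, (1 <= i <= n - 2)%N ->
        S i *m S i.+1 *m S i = S i.+1 *m S i *m S i.+1) /\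
     (
      forall i j, (1 <= i <= n.-1)%N -> (1 <= j <= n.-1)%N -> far i j ->
        S i *m S j = S j *m S i) /\
     (      forall i j, (1 <= i <= n.-1)%N -> (1 <= j <= n.-1)%N -> far i j ->
        T i *m T j = T j *m T i) /\
     (      forall i j, (1 <= i <= n.-1)%N -> (1 <= j <= n.-1)%N -> far i j ->
        T i *m S j = S j *m T i) /\
     (      forall i, (1 <= i <= n.-1)%N -> T i *m S i = S i *m T i) /\
     (      forall i, (1 <= i <= n - 2)%N ->
        S i *m S i.+1 *m T i = T i.+1 *m S i *m S i.+1) /\
     (      forall i, (1 <= i <= n - 2)%N ->
        S i.+1 *m S i *m T i.+1 = T i *m S i.+1 *m S i).

(* A representation of the singular braid monoid SM_n into M_{n+1}(C) is a
   monoid homomorphism; it is determined by the images S i of sigma_i and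
   T i of tau_i, which must satisfy the defining relations, the image of
   sigma_i^{-1} being an inverse of S i (so S i must be invertible). *)
Definition SM_rep (n : nat) (S T : nat -> 'M[CC]_(n.+1)) : Prop :=
  (forall i, (1 <= i <= n.-1)%N -> S i \in unitmx) /\ singular_relations n S T.

Definition SB_rep (n : nat) (S T : nat -> 'M[CC]_(n.+1)) : Prop :=
  [/\ forall i, (1 <= i <= n.-1)%N -> S i \in unitmx,
      forall i, (1 <= i <= n.-1)%N -> T i \in unitmx &
      singular_relations n S T].

(* Equivalence of two homogeneous 3-local representations (given by their
   blocks) of SM_n: conjugate by a single invertible matrix P on every
   generator (hence on every element). *)
Definition equiv_local3 (n : nat) (M N M' N' : 'M[CC]_3) : Prop :=
  exists P : 'M[CC]_(n.+1), P \in unitmx /\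
    forall i, (1 <= i <= n.-1)%N ->
      P *m local3 n i M *m invmx P = local3 n i M' /\
      P *m local3 n i N *m invmx P = local3 n i N'.

Definition mx3 (rows : seq (seq CC)) : 'M[CC]_3 :=
  \matrix_(r, c) nth 0 (nth [::] rows r) c.

Definition family1 (M N : 'M[CC]_3) : Prop :=
  exists m22 m23 n22 n32 : CC, m22 != 1 /\ m23 != 0 /\
    M = mx3 [:: [:: 1; 0; 0];
                           [:: 0; m22; m23];
                           [:: 0; (1 - m22) / m23; 0]] /\
    N = if m22 == 0 then
          mx3 [:: [:: 1; 0; 0];
                             [:: 0; n22; m23 ^+ 2 * n32];
                             [:: 0; n32; n22]]
        else
          mx3 [:: [:: 1; 0; 0];
                             [:: 0; 1 - m23 * n32; - (m23 ^+ 2 * n32) / (m22 - 1)];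
                             [:: 0; n32; (-1 + m22 + m23 * n32) / (m22 - 1)]].

Definition family2 (M N : 'M[CC]_3) : Prop :=
  exists m12 m22 n11 n21 : CC, m22 != 1 /\ m12 != 0 /\
    M = mx3 [:: [:: 0; m12; 0];
                           [:: (1 - m22) / m12; m22; 0];
                           [:: 0; 0; 1]] /\
    N = if m22 == 0 then
          mx3 [:: [:: n11; m12 ^+ 2 * n21; 0];
                             [:: n21; n11; 0];
                             [:: 0; 0; 1]]
        else
          mx3 [:: [:: (m12 * n21 + m22 - 1) / (m22 - 1);
                                 - ((m12 ^+ 2 * n21) / (m22 - 1)); 0];
                             [:: n21; 1 - m12 * n21; 0];
                             [:: 0; 0; 1]].

Definition family3 (M N : 'M[CC]_3) : Prop :=
  exists m22 m32 n12 : CC, m22 * m32 != 0 /\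
    M = mx3 [:: [:: 1; - m22 / m32; 0];
                           [:: 0; m22; 0];
                           [:: 0; m32; 1]] /\
    N = mx3 [:: [:: 1; n12; 0];
                           [:: 0; 1 - m32 * n12 + (m32 * n12) / m22; 0];
                           [:: 0; - ((m32 ^+ 2 * n12) / m22); 1]].

Definition family4 (M N : 'M[CC]_3) : Prop :=
  exists m22 m23 n21 : CC, m23 * m22 != 0 /\
    M = mx3 [:: [:: 1; 0; 0];
                           [:: - (m22 / m23); m22; m23];
                           [:: 0; 0; 1]] /\
    N = mx3 [:: [:: 1; 0; 0];
                           [:: n21; 1 - m23 * n21 + (m23 * n21) / m22;
                               - ((m23 ^+ 2 * n21) / m22)];
                           [:: 0; 0; 1]].

Definition family5 (M N : 'M[CC]_3) : Prop :=
  exists m23 m32 n22 n23 : CC, m23 * m32 != 0 /\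
    M = mx3 [:: [:: 1; 0; 0];
                           [:: 0; 0; m23];
                           [:: 0; m32; 1 - m23 * m32]] /\
    N = if m32 * m23 == 1 then
          mx3 [:: [:: 1; 0; 0];
                             [:: 0; n22; n23];
                             [:: 0; n23 / m23 ^+ 2; n22]]
        else
          mx3 [:: [:: 1; 0; 0];
                             [:: 0; n22; m23 - m23 * n22];
                             [:: 0; m32 - m32 * n22;
                                 m23 * m32 * (n22 - 1) + 1]].

Definition family6 (M N : 'M[CC]_3) : Prop :=
  exists m12 m21 n11 n12 n22 : CC, m12 * m21 != 0 /\
    M = mx3 [:: [:: 1 - m12 * m21; m12; 0];
                           [:: m21; 0; 0];
                           [:: 0; 0; 1]] /\
    N = if m12 * m21 == 1 then
          mx3 [:: [:: n11; n12; 0];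
                             [:: n12 / m12 ^+ 2; n11; 0];
                             [:: 0; 0; 1]]
        else
          mx3 [:: [:: m12 * m21 * (n22 - 1) + 1; m12 - m12 * n22; 0];
                             [:: m21 - m21 * n22; n22; 0];
                             [:: 0; 0; 1]].

Definition family7 (M N : 'M[CC]_3) : Prop :=
  exists m23 m32 n22 n23 : CC, m23 * m32 != 0 /\
    M = mx3 [:: [:: 1; 0; 0];
                           [:: 0; 0; m23];
                           [:: 0; m32; 0]] /\
    N = mx3 [:: [:: 1; 0; 0];
                           [:: 0; n22; n23];
                           [:: 0; (m32 * n23) / m23; n22]].

Definition family8 (M N : 'M[CC]_3) : Prop :=
  exists m12 m21 n11 n12 : CC, m12 * m21 != 0 /\
    M = mx3 [:: [:: 0; m12; 0];
                           [:: m21; 0; 0];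
                           [:: 0; 0; 1]] /\
    N = mx3 [:: [:: n11; n12; 0];
                           [:: (m21 * n12) / m12; n11; 0];
                           [:: 0; 0; 1]].

(* Restricted to the leading 5x5 block, a homogeneous 3-local representation
   of SM_n (n >= 4) is one of SM_4, so its relations become polynomial
   equations in the entries of the blocks M and N. The commutation of sigma_1
   and sigma_3 kills the corners M_13 and M_31 (its (1,5) entry reads
   M_13^2 = 0). A case analysis on the vanishing of M_12, M_23, M_21, M_32,
   M_11, M_22 and M_33 then solves the system: each branch puts (M, N) itself
   in one of the eight families, or forces M = 1, so the equivalence is the
   identity. The SB_n statement only adds invertibility of the tau_i. *)

From mathcomp Require Import all_boot all_order all_algebra.
From mathcomp Require Import complex.
From mathcomp Require Import Rstruct.
From mathcomp Require Import ring zify.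
Import Order.TTheory GRing.Theory Num.Theory.
Set Implicit Arguments.
Unset Strict Implicit.
Local Open Scope ring_scope.

Local Notation mx3_of a b c d e f g h k :=
  (mx3 [:: [:: a; b; c]; [:: d; e; f]; [:: g; h; k]]).

Section LeadingBlock.
Context {R : pzRingType}.

Definition lead_submx m n (hmn : (m <= n)%N) (A : 'M[R]_n.+1) : 'M[R]_m.+1 :=
  \matrix_(r, c) A (@widen_ord m.+1 n.+1 hmn r) (@widen_ord m.+1 n.+1 hmn c).

Definition block_lower m n (A : 'M[R]_n) :=
  forall r c : 'I_n, (r < m <= c)%N -> A r c = 0.

Lemma lead_submx_mul m n (hmn : (m <= n)%N) (A B : 'M[R]_n.+1) :
  block_lower m.+1 A -> lead_submx hmn (A *m B) = lead_submx hmn A *m lead_submx hmn B.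
Proof.
move=> lA; apply/matrixP => r c; rewrite !mxE.
rewrite (bigID (fun j : 'I_n.+1 => (j < m.+1)%N)) /= [X in _ + X]big1 ?addr0.
  by rewrite (big_ord_narrow (hmn : (m.+1 <= n.+1)%N)); apply: eq_bigr => j _; rewrite !mxE.
by move=> j; rewrite -leqNgt => jm; rewrite lA ?mul0r //= ltn_ord.
Qed.

Lemma lead_submx1 m n (hmn : (m <= n)%N) : lead_submx hmn 1%:M = 1%:M.
Proof. by apply/matrixP => r c; rewrite !mxE -val_eqE /= val_eqE. Qed.

End LeadingBlock.

Lemma lead_submx_unit (R : comUnitRingType) m n (hmn : (m <= n)%N) (A : 'M[R]_n.+1) :
  block_lower m.+1 A -> A \in unitmx -> lead_submx hmn A \in unitmx.
Proof.
move=> lA uA; have := lead_submx_mul hmn (invmx A) lA.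
by rewrite mulmxV // lead_submx1 => /esym/mulmx1_unit[].
Qed.

Lemma block_lower_local3 m n i (A : 'M[CC]_3) :
  (i.+1 <= m)%N -> block_lower m.+1 (local3 n i A).
Proof.
move=> im r c /andP[rm mc]; rewrite mxE.
have /negbTE-> : ~~ (c < i.+2)%N by rewrite -leqNgt (leq_trans _ mc).
have /negbTE-> : r != c by rewrite neq_ltn (leq_trans rm mc).
by rewrite !andbF.
Qed.

Lemma lead_submx_local3 m n (hmn : (m <= n)%N) i (A : 'M[CC]_3) :
  lead_submx hmn (local3 n i A) = local3 m i A.
Proof. by apply/matrixP => r c; rewrite !mxE. Qed.

Lemma local3_2_1 (A : 'M[CC]_3) : local3 2 1 A = A.
Proof. by apply/matrixP => r c; rewrite mxE /= !subn0 !ltn_ord !inord_val. Qed.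

Lemma local3_1 n i : local3 n i 1%:M = 1%:M.
Proof.
apply/matrixP => r c; rewrite !mxE.
case: ifP => // /andP[/andP[ir ri] /andP[ic ci]].
have i3 : (i.+2 <= i.-1 + 3)%N by case: (i) => // j; rewrite addn3.
have r3 : (r - i.-1 < 3)%N by rewrite ltn_subLR // (leq_trans ri i3).
have c3 : (c - i.-1 < 3)%N by rewrite ltn_subLR // (leq_trans ci i3).
by rewrite -val_eqE /= !inordK // eqn_sub2rE.
Qed.

Section Restriction.
Variables m n : nat.
Hypothesis hmn : (m <= n)%N.

Lemma lead_submx_local3_mul i (A : 'M[CC]_3) (B : 'M[CC]_n.+1) : (i.+1 <= m)%N ->
  lead_submx hmn (local3 n i A *m B) = local3 m i A *m lead_submx hmn B.
Proof.
by move=> im; rewrite lead_submx_mul ?lead_submx_local3 //; apply: block_lower_local3.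
Qed.

Lemma local3_restrict2 i j i' j' (A B C D : 'M[CC]_3) : (i.+1 <= m)%N -> (i'.+1 <= m)%N ->
  local3 n i A *m local3 n j B = local3 n i' C *m local3 n j' D ->
  local3 m i A *m local3 m j B = local3 m i' C *m local3 m j' D.
Proof.
move=> im i'm /(congr1 (lead_submx hmn)).
by rewrite !lead_submx_local3_mul // !lead_submx_local3.
Qed.

Lemma local3_restrict3 i j l i' j' l' (A B C D E F : 'M[CC]_3) :
  (i.+1 <= m)%N -> (j.+1 <= m)%N -> (i'.+1 <= m)%N -> (j'.+1 <= m)%N ->
  local3 n i A *m local3 n j B *m local3 n l C = local3 n i' D *m local3 n j' E *m local3 n l' F ->
  local3 m i A *m local3 m j B *m local3 m l C = local3 m i' D *m local3 m j' E *m local3 m l' F.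
Proof.
move=> im jm i'm j'm; rewrite -!mulmxA => /(congr1 (lead_submx hmn)).
by rewrite !lead_submx_local3_mul // !lead_submx_local3.
Qed.

Lemma SM_rep_local3_restrict (M N : 'M[CC]_3) :
  SM_rep n (fun i => local3 n i M) (fun i => local3 n i N) ->
  SM_rep m (fun i => local3 m i M) (fun i => local3 m i N).
Proof.
have rng1 i : (1 <= i <= m.-1)%N -> (i.+1 <= m)%N /\ (1 <= i <= n.-1)%N.
  by move: hmn => ? /andP[? ?]; split; lia.
have rng2 i : (1 <= i <= m - 2)%N -> [/\ (i.+2 <= m)%N, (i.+1 <= m)%N & (1 <= i <= n - 2)%N].
  by move: hmn => ? /andP[? ?]; split; lia.
move=> [uS [br [farS [farT [farTS [TS [mix1 mix2]]]]]]]; split.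
  move=> i /rng1[im /uS]; rewrite -(lead_submx_local3 hmn).
  by apply: lead_submx_unit; apply: block_lower_local3.
split; first by move=> i /rng2[i2 i1 /br]; apply: local3_restrict3.
split; first by move=> i j /rng1[im hi] /rng1[jm hj] /(farS _ _ hi hj); apply: local3_restrict2.
split; first by move=> i j /rng1[im hi] /rng1[jm hj] /(farT _ _ hi hj); apply: local3_restrict2.
split; first by move=> i j /rng1[im hi] /rng1[jm hj] /(farTS _ _ hi hj); apply: local3_restrict2.
split; first by move=> i /rng1[im /TS]; apply: local3_restrict2.
split; first by move=> i /rng2[i2 i1 /mix1]; apply: local3_restrict3.
by move=> i /rng2[i2 i1 /mix2]; apply: local3_restrict3.
Qed.

End Restriction.

Lemma mx3_surj (A : 'M[CC]_3) : exists a b c d e f g h k, A = mx3_of a b c d e f g h k.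
Proof.
pose o : nat -> 'I_3 := inord.
exists (A (o 0) (o 0)), (A (o 0) (o 1)), (A (o 0) (o 2)), (A (o 1) (o 0)), (A (o 1) (o 1)),
  (A (o 1) (o 2)), (A (o 2) (o 0)), (A (o 2) (o 1)), (A (o 2) (o 2)).
apply/matrixP => r c; rewrite mxE.
by case: r c => [[|[|[|r]]] hr] [[|[|[|c]]] hc] //=; congr (A _ _); apply: val_inj; rewrite /= inordK.
Qed.

Lemma mx3_1 : mx3_of 1 0 0 0 1 0 0 0 1 = 1%:M.
Proof. by apply/matrixP => r c; rewrite !mxE; case: r c => [[|[|[|r]]] hr] [[|[|[|c]]] hc]. Qed.

Lemma det_mx3 (R : comNzRingType) (A : 'M[R]_3) :
  let a i j := A (inord i) (inord j) in
  \det A = a 0 0 * (a 1 1 * a 2 2 - a 1 2 * a 2 1) - a 0 1 * (a 1 0 * a 2 2 - a 1 2 * a 2 0)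
         + a 0 2 * (a 1 0 * a 2 1 - a 1 1 * a 2 0).
Proof.
move=> a; have Ae (i j : 'I_3) : A i j = a i j by rewrite /a !inord_val.
rewrite (expand_det_row _ ord0) !big_ord_recl big_ord0 /cofactor.
rewrite !(expand_det_row _ ord0) !big_ord_recl !big_ord0 /cofactor !det_mx11 !mxE !Ae /=.
ring.
Qed.

Lemma local3_unit_block n (A : 'M[CC]_3) : (2 <= n)%N -> local3 n 1 A \in unitmx -> A \in unitmx.
Proof.
move=> n2 /(lead_submx_unit n2 (@block_lower_local3 2 n 1 A isT)).
by rewrite lead_submx_local3 local3_2_1.
Qed.

(* Entries of products of explicit 5x5 matrices, in a form that [simpl]
   evaluates (matrices and big sums are locked). *)
Definition ent5 (rows : seq (seq CC)) (r c : 'I_5) : CC := nth 0 (nth [::] rows r) c.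

Definition mx5 (rows : seq (seq CC)) : 'M[CC]_5 := \matrix_(r, c) ent5 rows r c.

Local Notation o5 j := (@Ordinal 5 j isT).

Definition fmul5 (F G : 'I_5 -> 'I_5 -> CC) (r c : 'I_5) : CC :=
  F r (o5 0) * G (o5 0) c + F r (o5 1) * G (o5 1) c + F r (o5 2) * G (o5 2) c +
  F r (o5 3) * G (o5 3) c + F r (o5 4) * G (o5 4) c.

Lemma mulmx5E (A B : 'M[CC]_5) r c : (A *m B) r c = fmul5 A B r c.
Proof.
rewrite mxE !big_ord_recl big_ord0 addr0 !addrA.
by congr (_ + _ + _ + _ + _); congr (A _ _ * B _ _); apply: val_inj.
Qed.

Lemma mx5_mul2E R1 R2 r c : (mx5 R1 *m mx5 R2) r c = fmul5 (ent5 R1) (ent5 R2) r c.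
Proof. by rewrite mulmx5E /fmul5 !mxE. Qed.

Lemma mx5_mul3E R1 R2 R3 r c :
  (mx5 R1 *m mx5 R2 *m mx5 R3) r c = fmul5 (fmul5 (ent5 R1) (ent5 R2)) (ent5 R3) r c.
Proof. by rewrite mulmx5E /fmul5 !mx5_mul2E !mxE. Qed.

Section Local3In5.
Variables a b c d e f g h k : CC.
Let A := mx3_of a b c d e f g h k.

Lemma local3_4_1E : local3 4 1 A =
  mx5 [:: [:: a; b; c; 0; 0]; [:: d; e; f; 0; 0]; [:: g; h; k; 0; 0];
          [:: 0; 0; 0; 1; 0]; [:: 0; 0; 0; 0; 1]].
Proof.
apply/matrixP => r s; rewrite !mxE.
by case: r s => [[|[|[|[|[|r]]]]] hr] [[|[|[|[|[|s]]]]] hs] //=; rewrite !inordK.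
Qed.

Lemma local3_4_2E : local3 4 2 A =
  mx5 [:: [:: 1; 0; 0; 0; 0]; [:: 0; a; b; c; 0]; [:: 0; d; e; f; 0];
          [:: 0; g; h; k; 0]; [:: 0; 0; 0; 0; 1]].
Proof.
apply/matrixP => r s; rewrite !mxE.
by case: r s => [[|[|[|[|[|r]]]]] hr] [[|[|[|[|[|s]]]]] hs] //=; rewrite !inordK.
Qed.

Lemma local3_4_3E : local3 4 3 A =
  mx5 [:: [:: 1; 0; 0; 0; 0]; [:: 0; 1; 0; 0; 0]; [:: 0; 0; a; b; c];
          [:: 0; 0; d; e; f]; [:: 0; 0; g; h; k]].
Proof.
apply/matrixP => r s; rewrite !mxE.
by case: r s => [[|[|[|[|[|r]]]]] hr] [[|[|[|[|[|s]]]]] hs] //=; rewrite !inordK.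
Qed.

End Local3In5.

Lemma eq_lincomb (R : pzRingType) (al l r z1 z2 : R) :
  l = r -> z1 - z2 = al * (l - r) -> z1 = z2.
Proof. by move=> -> /eqP; rewrite subrr mulr0 subr_eq0 => /eqP. Qed.
Arguments eq_lincomb {R} al {l r z1 z2}.

Lemma eq_lincomb2 (R : pzRingType) (al be l1 r1 l2 r2 z1 z2 : R) : l1 = r1 -> l2 = r2 ->
  z1 - z2 = al * (l1 - r1) + be * (l2 - r2) -> z1 = z2.
Proof. by move=> -> -> /eqP; rewrite !subrr !mulr0 addr0 subr_eq0 => /eqP. Qed.
Arguments eq_lincomb2 {R} al be {l1 r1 l2 r2 z1 z2}.

(* [entry rel i j] proves the goal, up to sign, as the (i, j) entry of the
   5x5 matrix equation [rel] between products of the local3 4 _ (mx3_of ...). *)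
Ltac entry rel i j :=
  let E := fresh "E" in
  have E := congr1 (fun X : 'M[CC]_5 => X (o5 i) (o5 j)) rel;
  rewrite /= ?local3_4_1E ?local3_4_2E ?local3_4_3E ?mx5_mul3E ?mx5_mul2E /fmul5 /ent5 /= in E;
  first [ by apply: (eq_lincomb 1 E); ring | by apply: (eq_lincomb (-1) E); ring ].

Ltac solve_field := field; repeat (apply/andP; split); try done.

(* [derive E al] proves [z1 = z2] from [E : l = r] by checking
   [z1 - z2 = +-al * (l - r)] with [field]; the nonvanishing side conditions
   must be hypotheses. *)
Ltac derive E al :=
  first [ by apply: (eq_lincomb al E); solve_field
        | by apply: (eq_lincomb (- al) E); solve_field ].

Ltac derive2 E1 E2 al be :=
  first [ by apply: (eq_lincomb2 al be E1 E2); solve_field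
        | by apply: (eq_lincomb2 (- al) (- be) E1 E2); solve_field ].

Ltac mx3_field := congr (mx3 [:: [:: _; _; _]; [:: _; _; _]; [:: _; _; _]]); solve_field.

Lemma SM_rep4_corner0 a b c d e f g h k (T : nat -> 'M[CC]_5) :
  SM_rep 4 (fun i => local3 4 i (mx3_of a b c d e f g h k)) T -> c = 0 /\ g = 0.
Proof.
case=> _ [_ [/(_ 1%N 3%N isT isT isT) far13 _]].
have /eqP : c * c = 0 by entry far13 0%N 4%N.
have /eqP : g * g = 0 by entry far13 4%N 0%N.
by rewrite !mulf_eq0 !orbb => /eqP-> /eqP->.
Qed.

(* Equations on the blocks M = mx3_of a b 0 d e f 0 h k of sigma_i and
   N = mx3_of p q r s t u v w x of tau_i. [det_neq0] says det M != 0; a field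
   [rel_ij] is the (i, j) entry (0-based) of the 5x5 relation [rel] of SM_4:
   [far13] is s1 s3 = s3 s1, [braid] is s1 s2 s1 = s2 s1 s2, [tau1_far] is
   t1 s3 = s3 t1, [tau3_far] is t3 s1 = s1 t3, [comm] is t1 s1 = s1 t1,
   [mixed12] is s1 s2 t1 = t2 s1 s2 and [mixed21] is s2 s1 t2 = t1 s2 s1
   (s = sigma, t = tau). *)
Record local_system (a b d e f h k p q r s t u v w x : CC) : Prop := LocalSystem {
  det_neq0 : a * (e * k - f * h) - b * d * k != 0;
  far13_12 : f * (a - 1) = 0;
  far13_13 : b * f = 0;
  far13_23 : b * (k - 1) = 0;
  far13_21 : h * (a - 1) = 0;
  far13_31 : d * h = 0;
  far13_32 : d * (k - 1) = 0;
  braid_00 : a * (a + b * d - 1) = 0;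
  braid_01 : b * (a * e + b * h) = 0;
  braid_10 : d * (e * a + f * d) = 0;
  braid_11 : d * b + (e * a + f * d) * e + (e * b + f * e) * h =
             (a * e + b * h) * a + (a * f + b * k) * d;
  braid_12 : (e * a + f * d) * f + (e * b + f * e) * k =
             (a * e + b * h) * b + (a * f + b * k) * e;
  braid_21 : (h * a + k * d) * e + (h * b + k * e) * h =
             (d * e + e * h) * a + (d * f + e * k) * d;
  braid_22 : (h * a + k * d) * f + (h * b + k * e) * k =
             (d * e + e * h) * b + (d * f + e * k) * e + f * h;
  braid_33 : k * (k + f * h - 1) = 0;
  tau1_far_03 : b * r = 0;
  tau1_far_13 : b * u = 0;
  tau1_far_23 : b * (x - 1) = 0;
  tau1_far_30 : d * v = 0;
  tau1_far_31 : d * w = 0;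
  tau1_far_32 : d * (x - 1) = 0;
  tau3_far_12 : f * (p - 1) = 0;
  tau3_far_13 : f * q = 0;
  tau3_far_14 : f * r = 0;
  tau3_far_21 : h * (p - 1) = 0;
  tau3_far_31 : h * s = 0;
  tau3_far_41 : h * v = 0;
  comm_01 : p * b + q * e + r * h = a * q + b * t;
  comm_11 : s * b + t * e + u * h = d * q + e * t + f * w;
  comm_12 : t * f + u * k = d * r + e * u + f * x;
  comm_21 : v * b + w * e + x * h = h * t + k * w;
  mixed12_01 : a * q + b * a * t + b * b * w = b * a;
  mixed12_11 : d * q + (e * a + f * d) * t + (e * b + f * e) * w =
               (p * e + q * h) * a + (p * f + q * k) * d;
  mixed12_12 : d * r + (e * a + f * d) * u + (e * b + f * e) * x =
               (p * e + q * h) * b + (p * f + q * k) * e + r * h;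
  mixed21_11 : (a * e + b * h) * p + (a * f + b * k) * s =
               s * b + (t * a + u * d) * e + (t * b + u * e) * h;
  mixed21_33 : h * h * r + h * k * u + k * x = k
}.

Lemma SM_rep4_local_system a b d e f h k p q r s t u v w x :
  SM_rep 4 (fun i => local3 4 i (mx3_of a b 0 d e f 0 h k))
           (fun i => local3 4 i (mx3_of p q r s t u v w x)) ->
  local_system a b d e f h k p q r s t u v w x.
Proof.
case=> /(_ 1%N isT) uS [/(_ 1%N isT) braid12 [/(_ 1%N 3%N isT isT isT) far13 [_ [farTS
  [/(_ 1%N isT) comm [/(_ 1%N isT) mixed12 /(_ 1%N isT) mixed21]]]]]].
have tau1_far := farTS 1%N 3%N isT isT isT.
have tau3_far := farTS 3%N 1%N isT isT isT.
have det : a * (e * k - f * h) - b * d * k != 0.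
  move: (local3_unit_block (isT : (2 <= 4)%N) uS).
  rewrite unitmxE unitfE det_mx3 /= !mxE !inordK //=.
  by apply: contra_neq => det0; rewrite -[RHS]det0; ring.
split; [ exact: det
  | by entry far13 1%N 2%N | by entry far13 1%N 3%N | by entry far13 2%N 3%N
  | by entry far13 2%N 1%N | by entry far13 3%N 1%N | by entry far13 3%N 2%N
  | by entry braid12 0%N 0%N | by entry braid12 0%N 1%N | by entry braid12 1%N 0%N
  | by entry braid12 1%N 1%N | by entry braid12 1%N 2%N | by entry braid12 2%N 1%N
  | by entry braid12 2%N 2%N | by entry braid12 3%N 3%N
  | by entry tau1_far 0%N 3%N | by entry tau1_far 1%N 3%N | by entry tau1_far 2%N 3%N
  | by entry tau1_far 3%N 0%N | by entry tau1_far 3%N 1%N | by entry tau1_far 3%N 2%N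
  | by entry tau3_far 1%N 2%N | by entry tau3_far 1%N 3%N | by entry tau3_far 1%N 4%N
  | by entry tau3_far 2%N 1%N | by entry tau3_far 3%N 1%N | by entry tau3_far 4%N 1%N
  | by entry comm 0%N 1%N | by entry comm 1%N 1%N | by entry comm 1%N 2%N
  | by entry comm 2%N 1%N
  | by entry mixed12 0%N 1%N | by entry mixed12 1%N 1%N | by entry mixed12 1%N 2%N
  | by entry mixed21 1%N 1%N | by entry mixed21 3%N 3%N ].
Qed.

Lemma subr1_neq1 (R : pzRingType) (y : R) : y != 0 -> 1 - y != 1.
Proof. by apply: contraNneq => /eqP; rewrite subr_eq addrC -subr_eq subrr eq_sym. Qed.

Section Reductions.
Variables a b d e f h k p q r s t u v w x : CC.
Hypothesis S : local_system a b d e f h k p q r s t u v w x.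

Lemma b_neq0_reduce : b != 0 -> [/\ f = 0, k = 1, r = 0, u = 0 & x = 1].
Proof.
move=> bn0; split; [derive (far13_13 S) b^-1 | derive (far13_23 S) b^-1
  | derive (tau1_far_03 S) b^-1 | derive (tau1_far_13 S) b^-1 | derive (tau1_far_23 S) b^-1].
Qed.

Lemma f_neq0_reduce : f != 0 -> [/\ b = 0, a = 1, p = 1, q = 0 & r = 0].
Proof.
move=> fn0; split; [derive (far13_13 S) f^-1 | derive (far13_12 S) f^-1
  | derive (tau3_far_12 S) f^-1 | derive (tau3_far_13 S) f^-1 | derive (tau3_far_14 S) f^-1].
Qed.

Lemma h_neq0_reduce : h != 0 -> [/\ a = 1, d = 0, p = 1, s = 0 & v = 0].
Proof.
move=> hn0; split; [derive (far13_21 S) h^-1 | derive (far13_31 S) h^-1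
  | derive (tau3_far_21 S) h^-1 | derive (tau3_far_31 S) h^-1 | derive (tau3_far_41 S) h^-1].
Qed.

Lemma d_neq0_reduce : d != 0 -> [/\ h = 0, k = 1, v = 0, w = 0 & x = 1].
Proof.
move=> dn0; split; [derive (far13_31 S) d^-1 | derive (far13_32 S) d^-1
  | derive (tau1_far_30 S) d^-1 | derive (tau1_far_31 S) d^-1 | derive (tau1_far_32 S) d^-1].
Qed.

End Reductions.

Lemma family3_case a b d e f h k p q r s t u v w x :
  local_system a b d e f h k p q r s t u v w x -> b != 0 -> h != 0 ->
  family3 (mx3_of a b 0 d e f 0 h k) (mx3_of p q r s t u v w x).
Proof.
move=> S bn0 hn0.
have [f0 k1 r0 u0 x1] := b_neq0_reduce S bn0.
have [a1 d0 p1 s0 v0] := h_neq0_reduce S hn0.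
subst f k r u x a d p s v.
have ee : e = - (b * h) by derive (braid_01 S) b^-1.
subst e.
have ew : w = h * q / b by derive2 (mixed12_11 S) (comm_21 S) b^-1 (-1 : CC).
subst w.
have et : t = 1 - h * q - q / b by derive (mixed12_11 S) (- (b * h))^-1.
subst t.
exists (- (b * h)), h, q; split; first by rewrite mulf_neq0 // oppr_eq0 mulf_neq0.
by split; mx3_field.
Qed.

Lemma family8_case a b d e f h k p q r s t u v w x :
  local_system a b d e f h k p q r s t u v w x -> b != 0 -> h = 0 -> a = 0 -> e = 0 ->
  family8 (mx3_of a b 0 d e f 0 h k) (mx3_of p q r s t u v w x).
Proof.
move=> S bn0 h0 a0 e0.
have [f0 k1 r0 u0 x1] := b_neq0_reduce S bn0.
subst h a e f k r u x.
have dn0 : d != 0 by apply: contraNneq (det_neq0 S) => ->; apply/eqP; ring.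
have [_ _ v0 w0 _] := d_neq0_reduce S dn0.
subst v w.
have es : s = d * q / b by derive (comm_11 S) b^-1.
have et : t = p by derive (comm_01 S) b^-1.
subst s t.
exists b, d, p, q; split; first by rewrite mulf_neq0.
by split; mx3_field.
Qed.

Lemma family2_case a b d e f h k p q r s t u v w x :
  local_system a b d e f h k p q r s t u v w x -> b != 0 -> h = 0 -> a = 0 -> e != 0 ->
  family2 (mx3_of a b 0 d e f 0 h k) (mx3_of p q r s t u v w x).
Proof.
move=> S bn0 h0 a0 en0.
have [f0 k1 r0 u0 x1] := b_neq0_reduce S bn0.
subst h a f k r u x.
have dn0 : d != 0 by apply: contraNneq (det_neq0 S) => ->; apply/eqP; ring.
have [_ _ v0 w0 _] := d_neq0_reduce S dn0.
subst v w.
have ee : e = 1 - b * d by derive (braid_22 S) e^-1.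
subst e.
have eq : q = b * s / d by derive (comm_11 S) d^-1.
subst q.
have ep : p = 1 - s / d by derive (mixed12_12 S) ((1 - b * d) * b)^-1.
subst p.
have et : t = 1 - b * s by derive (comm_01 S) b^-1.
subst t.
have bd0 : 1 - b * d - 1 != 0 by rewrite addrAC subrr add0r oppr_eq0 mulf_neq0.
exists b, (1 - b * d), 0, s; rewrite (negbTE en0).
by split; [apply: subr1_neq1; rewrite mulf_neq0 | split=> //; split; mx3_field].
Qed.

Lemma family6_case a b d e f h k p q r s t u v w x :
  local_system a b d e f h k p q r s t u v w x -> b != 0 -> h = 0 -> a != 0 ->
  family6 (mx3_of a b 0 d e f 0 h k) (mx3_of p q r s t u v w x).
Proof.
move=> S bn0 h0 an0.
have [f0 k1 r0 u0 x1] := b_neq0_reduce S bn0.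
subst h f k r u x.
have e0 : e = 0 by derive (braid_01 S) (a * b)^-1.
subst e.
have ea : a = 1 - b * d by derive (braid_00 S) a^-1.
subst a.
have dn0 : d != 0 by apply: contraNneq (det_neq0 S) => ->; apply/eqP; ring.
have [_ _ v0 w0 _] := d_neq0_reduce S dn0.
subst v w.
have eq : q = b - b * t by derive (mixed12_01 S) (1 - b * d)^-1.
subst q.
have es : s = d - d * t by derive (comm_11 S) b^-1.
have ep : p = b * d * (t - 1) + 1 by derive (comm_01 S) b^-1.
subst s p.
have bd1 : b * d != 1 by rewrite eq_sym -subr_eq0.
exists b, d, 0, 0, t; rewrite (negbTE bd1); split; first by rewrite mulf_neq0.
by split; mx3_field.
Qed.

Lemma family4_case a b d e f h k p q r s t u v w x :
  local_system a b d e f h k p q r s t u v w x -> f != 0 -> d != 0 ->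
  family4 (mx3_of a b 0 d e f 0 h k) (mx3_of p q r s t u v w x).
Proof.
move=> S fn0 dn0.
have [b0 a1 p1 q0 r0] := f_neq0_reduce S fn0.
have [h0 k1 v0 w0 x1] := d_neq0_reduce S dn0.
subst b a p q r h k v w x.
have ee : e = - (d * f) by derive (braid_10 S) d^-1.
subst e.
have eu : u = f * s / d by derive2 (comm_12 S) (mixed21_11 S) (1 : CC) (- d^-1).
subst u.
have et : t = 1 - f * s - s / d by derive (mixed21_11 S) (d * f)^-1.
subst t.
exists (- (d * f)), f, s; split; first by rewrite mulf_neq0 // oppr_eq0 mulf_neq0.
by split; mx3_field.
Qed.

Lemma family7_case a b d e f h k p q r s t u v w x :
  local_system a b d e f h k p q r s t u v w x -> f != 0 -> d = 0 -> e = 0 -> k = 0 ->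
  family7 (mx3_of a b 0 d e f 0 h k) (mx3_of p q r s t u v w x).
Proof.
move=> S fn0 d0 e0 k0.
have [b0 a1 p1 q0 r0] := f_neq0_reduce S fn0.
subst b a p q r d e k.
have hn0 : h != 0 by apply: contraNneq (det_neq0 S) => ->; apply/eqP; ring.
have [_ _ _ s0 v0] := h_neq0_reduce S hn0.
subst s v.
have ew : w = h * u / f by derive (comm_11 S) f^-1.
have ex : x = t by derive (comm_12 S) f^-1.
subst w x.
exists f, h, t, u; split; first by rewrite mulf_neq0.
by split; mx3_field.
Qed.

Lemma family5_case a b d e f h k p q r s t u v w x :
  local_system a b d e f h k p q r s t u v w x -> f != 0 -> d = 0 -> e = 0 -> k != 0 ->
  family5 (mx3_of a b 0 d e f 0 h k) (mx3_of p q r s t u v w x).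
Proof.
move=> S fn0 d0 e0 kn0.
have [b0 a1 p1 q0 r0] := f_neq0_reduce S fn0.
subst b a p q r d e.
have ek : k = 1 - f * h by derive (braid_33 S) k^-1.
subst k.
have hn0 : h != 0 by apply: contraNneq (det_neq0 S) => ->; apply/eqP; ring.
have [_ _ _ s0 v0] := h_neq0_reduce S hn0.
subst s v.
have ex : x = 1 - h * u by derive (mixed21_33 S) (1 - f * h)^-1.
subst x.
have eu : u = f - f * t by derive (comm_12 S) (1 : CC).
subst u.
have ew : w = h - h * t by derive (comm_11 S) f^-1.
subst w.
have hf1 : h * f != 1 by rewrite mulrC eq_sym -subr_eq0.
exists f, h, t, 0; rewrite (negbTE hf1); split; first by rewrite mulf_neq0.
by split; mx3_field.
Qed.

Lemma family1_case a b d e f h k p q r s t u v w x :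
  local_system a b d e f h k p q r s t u v w x -> f != 0 -> d = 0 -> e != 0 ->
  family1 (mx3_of a b 0 d e f 0 h k) (mx3_of p q r s t u v w x).
Proof.
move=> S fn0 d0 en0.
have [b0 a1 p1 q0 r0] := f_neq0_reduce S fn0.
subst b a p q r d.
have k0 : k = 0 by derive (braid_12 S) (e * f)^-1.
subst k.
have ee : e = 1 - f * h by derive (braid_11 S) e^-1.
subst e.
have hn0 : h != 0 by apply: contraNneq (det_neq0 S) => ->; apply/eqP; ring.
have [_ _ _ s0 v0] := h_neq0_reduce S hn0.
subst s v.
have eu : u = f * w / h by derive (comm_11 S) h^-1.
subst u.
have ex : x = 1 - w / h by derive (mixed12_12 S) ((1 - f * h) * f)^-1.
subst x.
have et : t = 1 - f * w by derive (comm_12 S) f^-1.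
subst t.
have fh0 : 1 - f * h - 1 != 0 by rewrite addrAC subrr add0r oppr_eq0 mulf_neq0.
exists (1 - f * h), f, 0, w; rewrite (negbTE en0).
by split; [apply: subr1_neq1; rewrite mulf_neq0 | split=> //; split; mx3_field].
Qed.

Lemma local_system_trivial a b d e f h k p q r s t u v w x :
  local_system a b d e f h k p q r s t u v w x -> b = 0 -> f = 0 ->
  mx3_of a b 0 d e f 0 h k = 1%:M.
Proof.
move=> S b0 f0; subst b f.
have : a * e * k != 0.
  by move: (det_neq0 S); apply: contra_neq => aek0; rewrite -[RHS]aek0; ring.
rewrite !mulf_eq0 !negb_or => /andP[/andP[an0 en0] kn0].
have [d0 | dn0] := eqVneq d 0; last first.
  have a0 : a = 0 by derive (braid_10 S) (d * e)^-1.
  by rewrite a0 eqxx in an0.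
subst d; have [h0 | hn0] := eqVneq h 0; last first.
  have [a1 _ _ _ _] := h_neq0_reduce S hn0; subst a.
  have k0 : k = 0 by derive (braid_21 S) (e * h)^-1.
  by rewrite k0 eqxx in kn0.
subst h.
have a1 : a = 1 by derive (braid_00 S) a^-1.
have k1 : k = 1 by derive (braid_33 S) k^-1.
subst a k.
have e1 : e = 1 by derive (braid_11 S) e^-1.
by subst e; apply: mx3_1.
Qed.

Definition in_families (M N : 'M[CC]_3) : Prop :=
  family1 M N \/ family2 M N \/ family3 M N \/ family4 M N \/
  family5 M N \/ family6 M N \/ family7 M N \/ family8 M N.

Lemma local_system_families a b d e f h k p q r s t u v w x :
  local_system a b d e f h k p q r s t u v w x -> mx3_of a b 0 d e f 0 h k != 1%:M ->
  in_families (mx3_of a b 0 d e f 0 h k) (mx3_of p q r s t u v w x).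
Proof.
move=> S M1; have [b0 | bn0] := eqVneq b 0.
  have [f0 | fn0] := eqVneq f 0.
    by rewrite (local_system_trivial S b0 f0) eqxx in M1.
  have [d0 | dn0] := eqVneq d 0; last by do 3 right; left; apply: family4_case.
  have [e0 | en0] := eqVneq e 0; last by left; apply: family1_case.
  have [k0 | kn0] := eqVneq k 0.
    by do 6 right; left; apply: family7_case.
  by do 4 right; left; apply: family5_case.
have [h0 | hn0] := eqVneq h 0; last by do 2 right; left; apply: family3_case.
have [a0 | an0] := eqVneq a 0; last by do 5 right; left; apply: family6_case.
have [e0 | en0] := eqVneq e 0; last by right; left; apply: family2_case.
by do 7 right; apply: family8_case.
Qed.

Lemma equiv_local3_refl n (M N : 'M[CC]_3) : equiv_local3 n M N M N.
Proof.
exists 1%:M; split; first exact: unitmx1.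
by move=> i _; rewrite invmx1 !mul1mx !mulmx1.
Qed.

Unset Implicit Arguments.
Set Strict Implicit.

Theorem theorem4p2 (n : nat) (M N : 'M[CC]_3) :
  (4 <= n)%N ->
  braid_rep n (fun i => local3 n i M) ->
  (exists i, (1 <= i <= n.-1)%N /\ local3 n i M != 1%:M) ->
  SM_rep n (fun i => local3 n i M) (fun i => local3 n i N) ->
  (exists M' N' : 'M[CC]_3,
      (family1 M' N' \/ family2 M' N' \/ family3 M' N' \/ family4 M' N' \/
       family5 M' N' \/ family6 M' N' \/ family7 M' N' \/ family8 M' N')
      /\ equiv_local3 n M N M' N')
  /\ ((forall i, (1 <= i <= n.-1)%N -> local3 n i N \in unitmx) ->
      SB_rep n (fun i => local3 n i M) (fun i => local3 n i N)).
Proof.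
move=> n4 _ [i [_ nontrivial]] rep; split; last by case: rep => uS rels uT; split.
suff fam : in_families M N by exists M, N; split; [exact: fam | exact: equiv_local3_refl].
have M1 : M != 1%:M by apply: contraNneq nontrivial => ->; rewrite local3_1.
have rep4 := SM_rep_local3_restrict n4 rep.
have [a [b [c [d [e [f [g [h [k eM]]]]]]]]] := mx3_surj M.
have [p [q [r [s [t [u [v [w [x eN]]]]]]]]] := mx3_surj N.
rewrite {}eM {}eN in rep4 M1 *.
have [c0 g0] := SM_rep4_corner0 rep4.
rewrite {}c0 {}g0 in rep4 M1 *.
exact: local_system_families (SM_rep4_local_system rep4) M1.
Qed.
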